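(* Let $h>0$, $0<\alpha\le 2$, $N=2^n$, and $M=2^m$ with $M\ge 2N$. Let $E^{(M)}$ be the $N\times N$ matrix with entries $(E^{(M)})_{ij}=\sum_{\ell\in\mathbb Z\setminus\{0\}}c_{i-j+\ell M}$ for $0\le i,j\le N-1$, where $c_r$ is the kernel defined in the context. Then \[ \|E^{(M)}\|_2\le \sum_{r\in\mathbb Z,\ |r|\ge M-N+1}|c_r|. \]
   Context: For $r\in\mathbb Z$, $c_r=\frac{h}{2\pi}\int_{-\pi/h}^{\pi/h}|\xi|^\alpha e^{i\xi h r}\,d\xi$ (the convolution kernel of the semi-discrete fractional Laplacian with symbol $|\xi|^\alpha$ on the lattice $h\mathbb Z$); it is real and even, $c_r=c_{-r}$. $\|\cdot\|_2$ denotes the spectral (operator 2-)norm. *)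

From Stdlib Require Import Reals ZArith.
From Coquelicot Require Import Coquelicot.
Open Scope R_scope.

(* |xi|^alpha, with the convention 0^alpha = 0 (alpha > 0). *)
Definition abs_pow (xi alpha : R) : R :=
  match Req_EM_T xi 0 with left _ => 0 | right _ => Rpower (Rabs xi) alpha end.

Definition cexpi (theta : R) : C := (cos theta, sin theta).

(* c_r = h/(2 pi) int_{-pi/h}^{pi/h} |xi|^alpha e^{i xi h r} dxi  (complex Riemann integral).
   The context states this is real; c_r is taken as the real part of that complex number. *)
Definition ckernelC (h alpha : R) (r : Z) : C :=
  scal (h / (2 * PI))
    (@RInt C_R_CompleteNormedModule
          (fun xi : R => scal (abs_pow xi alpha) (cexpi (xi * h * IZR r)))
          (- PI / h) (PI / h)).

Definition ckernel (h alpha : R) (r : Z) : R := Re (ckernelC h alpha r).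

Fixpoint rsum (n : nat) (f : nat -> R) : R :=
  match n with O => 0 | S k => rsum k f + f k end.

Definition vnorm (N : nat) (x : nat -> R) : R := sqrt (rsum N (fun i => x i ^ 2)).

Definition matvec (N : nat) (A : nat -> nat -> R) (x : nat -> R) : nat -> R :=
  fun i => rsum N (fun j => A i j * x j).

Definition opnorm2 (N : nat) (A : nat -> nat -> R) : Rbar :=
  Lub_Rbar (fun t => exists x : nat -> R, vnorm N x <= 1 /\ t = vnorm N (matvec N A x)).

(* (E^{(M)})_{ij} = sum_{l in Z \ {0}} c_{i-j+lM}, written as
   sum_{k >= 0} (c_{i-j+(k+1)M} + c_{i-j-(k+1)M}). *)
Definition Emat (h alpha : R) (N M : nat) (i j : nat) : R :=
  Series (fun k : nat =>
    ckernel h alpha (Z.of_nat i - Z.of_nat j + Z.of_nat (S k) * Z.of_nat M)%Z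
  + ckernel h alpha (Z.of_nat i - Z.of_nat j - Z.of_nat (S k) * Z.of_nat M)%Z).

(* sum_{r in Z, |r| >= K} |c_r|, written as sum_{k>=0} (|c_{K+k}| + |c_{-(K+k)}|)  (K >= 1). *)
Definition tail_abs_sum (h alpha : R) (K : nat) : R :=
  Series (fun k : nat =>
    Rabs (ckernel h alpha (Z.of_nat (K + k)))
  + Rabs (ckernel h alpha (- Z.of_nat (K + k))%Z)).

(* Schur's test bounds the spectral norm of [E] by its largest absolute row or column sum. In
   row [i], as [j] ranges over [0, N) and [l] over the nonzero integers, the indices
   [i - j + l M] are pairwise distinct and of modulus at least [M - N + 1], so each row sum of
   [|E_ij|] is at most the tail [sum_(|r| >= M - N + 1) |c_r|]; columns follow by the reflection
   [r -> -r]. This needs the tail to converge (a divergent [Series] is [0] in Coquelicot), which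
   holds because [|c_r| = O(|r| ^ (-1 - min(alpha, 1)))]: split the cosine integral defining
   [c_r] at [pi / (h |r|)], bound the piece near [0] trivially and integrate the other by parts
   twice. *)

From Stdlib Require Import Reals ZArith Lia Lra.
From Coquelicot Require Import Coquelicot.
Open Scope R_scope.

Lemma rsum_ext n u v : (forall k, (k < n)%nat -> u k = v k) -> rsum n u = rsum n v.
Proof.
  induction n as [|n IH]; intros Huv; cbn [rsum]; [reflexivity|].
  rewrite IH by (intros; apply Huv; lia). rewrite (Huv n) by lia. reflexivity.
Qed.

Lemma rsum_le n u v : (forall k, (k < n)%nat -> u k <= v k) -> rsum n u <= rsum n v.
Proof.
  induction n as [|n IH]; intros Huv; cbn [rsum]; [lra|].
  apply Rplus_le_compat; [apply IH; intros; apply Huv; lia | apply Huv; lia].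
Qed.

Lemma rsum_nonneg n u : (forall k, 0 <= u k) -> 0 <= rsum n u.
Proof. intros Hu; induction n as [|n IH]; cbn [rsum]; [lra | specialize (Hu n); lra]. Qed.

Lemma rsum_0 n : rsum n (fun _ => 0) = 0.
Proof. induction n as [|n IH]; cbn [rsum]; [reflexivity | rewrite IH; ring]. Qed.

Lemma rsum_plus n u v : rsum n (fun k => u k + v k) = rsum n u + rsum n v.
Proof. induction n as [|n IH]; cbn [rsum]; [ring | rewrite IH; ring]. Qed.

Lemma rsum_scal n c u : rsum n (fun k => c * u k) = c * rsum n u.
Proof. induction n as [|n IH]; cbn [rsum]; [ring | rewrite IH; ring]. Qed.

Lemma rsum_abs n u : Rabs (rsum n u) <= rsum n (fun k => Rabs (u k)).
Proof.
  induction n as [|n IH]; cbn [rsum]; [rewrite Rabs_R0; lra|].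
  eapply Rle_trans; [apply Rabs_triang | lra].
Qed.

Lemma rsum_swap n m f :
  rsum n (fun i => rsum m (fun j => f i j)) = rsum m (fun j => rsum n (fun i => f i j)).
Proof.
  induction n as [|n IH]; cbn [rsum].
  - induction m as [|m IHm]; cbn [rsum]; [reflexivity | rewrite <- IHm; ring].
  - rewrite IH, <- rsum_plus. reflexivity.
Qed.

Lemma rsum_add n m u : rsum (n + m) u = rsum n u + rsum m (fun k => u (n + k)%nat).
Proof.
  induction m as [|m IH]; cbn [rsum].
  - rewrite Nat.add_0_r; ring.
  - rewrite Nat.add_succ_r; cbn [rsum]. rewrite IH; ring.
Qed.

Lemma rsum_le_length n m u : (forall k, 0 <= u k) -> (n <= m)%nat -> rsum n u <= rsum m u.
Proof.
  intros Hu Hnm. replace m with (n + (m - n))%nat by lia. rewrite rsum_add.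
  assert (0 <= rsum (m - n) (fun k => u (n + k)%nat)) by (apply rsum_nonneg; auto). lra.
Qed.

Lemma rsum_term_le n u j : (forall k, 0 <= u k) -> (j < n)%nat -> u j <= rsum n u.
Proof.
  intros Hu Hj. apply Rle_trans with (rsum (S j) u); [|apply rsum_le_length; auto].
  cbn [rsum]. assert (0 <= rsum j u) by (apply rsum_nonneg; auto). lra.
Qed.

Lemma rsum_rev n u : rsum n (fun k => u (n - 1 - k)%nat) = rsum n u.
Proof.
  revert u; induction n as [|n IH]; intros u; [reflexivity|].
  replace (S n) with (1 + n)%nat at 2 by lia. rewrite rsum_add. cbn [rsum].
  rewrite <- (IH (fun k => u (1 + k)%nat)).
  rewrite (rsum_ext n _ (fun k => u (1 + (n - 1 - k))%nat)) by (intros; f_equal; lia).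
  replace (S n - 1 - n)%nat with 0%nat by lia. ring.
Qed.

Lemma rsum_blocks L M u :
  rsum L (fun k => rsum M (fun q => u (k * M + q)%nat)) = rsum (L * M) u.
Proof.
  induction L as [|L IH]; [reflexivity|].
  cbn [rsum]. rewrite IH, <- rsum_add. f_equal. lia.
Qed.

Lemma rsum_window_le n M p u : (forall k, 0 <= u k) -> (p + n <= M)%nat ->
  rsum n (fun q => u (p + q)%nat) <= rsum M u.
Proof.
  intros Hu Hp. replace M with (p + (M - p))%nat by lia. rewrite rsum_add.
  assert (0 <= rsum p u) by (apply rsum_nonneg; auto).
  assert (rsum n (fun q => u (p + q)%nat) <= rsum (M - p) (fun q => u (p + q)%nat))
    by (apply rsum_le_length; [intros; apply Hu | lia]).
  lra.
Qed.

Lemma rsum_rev_window_le n M p u : (forall k, 0 <= u k) -> (p + n <= M)%nat ->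
  rsum n (fun q => u (p + (n - 1 - q))%nat) <= rsum M u.
Proof.
  intros Hu Hp. rewrite (rsum_rev n (fun q => u (p + q)%nat)). apply rsum_window_le; auto.
Qed.

Lemma sum_n_rsum u n : sum_n u n = rsum (S n) u.
Proof.
  induction n as [|n IH]; [rewrite sum_O; cbn [rsum]; now rewrite Rplus_0_l|].
  rewrite sum_Sn, IH. reflexivity.
Qed.

Lemma ex_series_rsum_bounded u B : (forall k, 0 <= u k) -> (forall n, rsum n u <= B) ->
  ex_series u /\ Series u <= B.
Proof.
  intros Hu HB.
  assert (Hsum : forall n, sum_n u n <= B) by (intros n; rewrite sum_n_rsum; apply HB).
  assert (Hincr : forall n, sum_n u n <= sum_n u (S n))
    by (intros n; rewrite sum_Sn; specialize (Hu (S n)); unfold plus; simpl; lra).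
  destruct (ex_finite_lim_seq_incr _ B Hincr Hsum) as [l Hl].
  split; [exists l; exact Hl|].
  unfold Series. rewrite (is_lim_seq_unique _ _ Hl). simpl.
  apply (is_lim_seq_le (sum_n u) (fun _ => B) l B); [exact Hsum | exact Hl | apply is_lim_seq_const].
Qed.

Lemma rsum_le_Series u n : (forall k, 0 <= u k) -> ex_series u -> rsum n u <= Series u.
Proof.
  intros Hu Hex. apply Rle_trans with (rsum (S n) u); [apply rsum_le_length; auto|].
  rewrite <- sum_n_rsum.
  apply (is_lim_seq_incr_compare (sum_n u)); [apply Series_correct; exact Hex|].
  intros k; rewrite sum_Sn; specialize (Hu (S k)); unfold plus; simpl; lra.
Qed.

Lemma abs_Series_le u v : (forall k, Rabs (u k) <= v k) -> ex_series v -> Rabs (Series u) <= Series v.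
Proof.
  intros Huv Hv.
  assert (Habs : ex_series (fun k => Rabs (u k))).
  { apply (@ex_series_le R_AbsRing R_CompleteNormedModule _ v); auto.
    intros k. change (Rabs (Rabs (u k)) <= v k). rewrite Rabs_Rabsolu. apply Huv. }
  eapply Rle_trans; [apply Series_Rabs; exact Habs|].
  apply Series_le; [|exact Hv]. intros k; split; [apply Rabs_pos | apply Huv].
Qed.

Lemma Series_rsum n (f : nat -> nat -> R) : (forall j, (j < n)%nat -> ex_series (f j)) ->
  ex_series (fun k => rsum n (fun j => f j k)) /\
  Series (fun k => rsum n (fun j => f j k)) = rsum n (fun j => Series (f j)).
Proof.
  induction n as [|n IH]; intros Hf; cbn [rsum].
  - assert (H0 : is_series (fun _ : nat => 0) 0).
    { change (is_lim_seq (sum_n (fun _ : nat => 0)) 0).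
      apply (is_lim_seq_ext (fun _ => 0)); [|apply is_lim_seq_const].
      intros k; rewrite sum_n_rsum, rsum_0; reflexivity. }
    split; [exists 0; exact H0 | apply is_series_unique; exact H0].
  - destruct IH as [IHex IHeq]; [intros; apply Hf; lia|].
    assert (Hn : ex_series (f n)) by (apply Hf; lia).
    split; [exact (@ex_series_plus R_AbsRing R_NormedModule _ _ IHex Hn)|].
    rewrite Series_plus, IHeq by assumption. reflexivity.
Qed.

Lemma rsum_weighted_Cauchy_Schwarz n p z : (forall j, 0 <= p j) ->
  rsum n (fun j => p j * z j) ^ 2 <= rsum n p * rsum n (fun j => p j * z j ^ 2).
Proof.
  intros Hp. induction n as [|n IH]; cbn [rsum]; [lra|].
  set (A := rsum n p) in *. set (B := rsum n (fun j => p j * z j ^ 2)) in *.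
  set (C := rsum n (fun j => p j * z j)) in *.
  assert (HA : 0 <= A) by (apply rsum_nonneg; auto).
  assert (HB : 0 <= B) by (apply rsum_nonneg; intros; apply Rmult_le_pos; [auto | apply pow2_ge_0]).
  specialize (Hp n).
  (* [A (A z^2 + B - 2 z C) = (A z - C)^2 + (A B - C^2)] *)
  assert (Hcross : 2 * z n * C <= A * z n ^ 2 + B).
  { destruct (Req_dec A 0) as [HA0|HA0].
    - assert (C = 0) by (rewrite HA0 in IH; nra). subst C. nra.
    - assert (0 <= (A * z n - C) ^ 2) by apply pow2_ge_0. nra. }
  nra.
Qed.

Lemma rsum_matvec_sq_le N A T : 0 <= T ->
  (forall i, (i < N)%nat -> rsum N (fun j => Rabs (A i j)) <= T) ->
  (forall j, (j < N)%nat -> rsum N (fun i => Rabs (A i j)) <= T) ->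
  forall x, rsum N (fun i => matvec N A x i ^ 2) <= T * T * rsum N (fun j => x j ^ 2).
Proof.
  intros HT Hrow Hcol x.
  apply Rle_trans with (rsum N (fun i => T * rsum N (fun j => Rabs (A i j) * x j ^ 2))).
  - apply rsum_le. intros i Hi. unfold matvec.
    assert (Habs : Rabs (rsum N (fun j => A i j * x j)) <= rsum N (fun j => Rabs (A i j) * Rabs (x j))).
    { eapply Rle_trans; [apply rsum_abs | right; apply rsum_ext; intros; apply Rabs_mult]. }
    rewrite <- pow2_abs.
    eapply Rle_trans; [apply pow_incr; split; [apply Rabs_pos | exact Habs]|].
    replace (rsum N (fun j => Rabs (A i j) * x j ^ 2))
      with (rsum N (fun j => Rabs (A i j) * Rabs (x j) ^ 2))
      by (apply rsum_ext; intros; now rewrite pow2_abs).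
    eapply Rle_trans; [apply rsum_weighted_Cauchy_Schwarz; intros; apply Rabs_pos|].
    apply Rmult_le_compat_r; [|apply Hrow; exact Hi].
    apply rsum_nonneg; intros; apply Rmult_le_pos; [apply Rabs_pos | apply pow2_ge_0].
  - rewrite rsum_scal, rsum_swap, Rmult_assoc. apply Rmult_le_compat_l; [exact HT|].
    rewrite <- rsum_scal. apply rsum_le. intros j Hj.
    rewrite (rsum_ext N _ (fun i => x j ^ 2 * Rabs (A i j))) by (intros; ring).
    rewrite rsum_scal. specialize (Hcol j Hj). assert (0 <= x j ^ 2) by apply pow2_ge_0. nra.
Qed.

Lemma opnorm2_le_Schur N A T : 0 <= T ->
  (forall i, (i < N)%nat -> rsum N (fun j => Rabs (A i j)) <= T) ->
  (forall j, (j < N)%nat -> rsum N (fun i => Rabs (A i j)) <= T) ->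
  Rbar_le (opnorm2 N A) (Finite T).
Proof.
  intros HT Hrow Hcol. unfold opnorm2.
  apply Lub_Rbar_correct. intros t [x [Hx ->]]. unfold vnorm in *.
  set (S := rsum N (fun j => x j ^ 2)) in *.
  assert (HS : 0 <= S) by (apply rsum_nonneg; intros; apply pow2_ge_0).
  assert (HS1 : S <= 1) by (rewrite <- (sqrt_sqrt S HS); assert (0 <= sqrt S) by apply sqrt_pos; nra).
  assert (HAx := rsum_matvec_sq_le N A T HT Hrow Hcol x). fold S in HAx.
  change (sqrt (rsum N (fun i => matvec N A x i ^ 2)) <= T).
  rewrite <- (sqrt_square T HT). apply sqrt_le_1_alt.
  assert (0 <= T * T) by nra. nra.
Qed.

Definition alias_mx (c : Z -> R) (M i j : nat) : R :=
  Series (fun k => c (Z.of_nat i - Z.of_nat j + Z.of_nat (S k) * Z.of_nat M)%Z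
                 + c (Z.of_nat i - Z.of_nat j - Z.of_nat (S k) * Z.of_nat M)%Z).

Definition tail_abs (c : Z -> R) (K t : nat) : R :=
  Rabs (c (Z.of_nat (K + t))) + Rabs (c (- Z.of_nat (K + t))%Z).

Lemma tail_abs_nonneg c K t : 0 <= tail_abs c K t.
Proof. unfold tail_abs. apply Rplus_le_le_0_compat; apply Rabs_pos. Qed.

Section AliasRowSum.
Variables (c : Z -> R) (N M : nat).
Hypothesis HNM : (2 * N <= M)%nat.
Let K := (M - N + 1)%nat.
Hypothesis Htail : ex_series (tail_abs c K).

Let g i j k := Rabs (c (Z.of_nat i - Z.of_nat j + Z.of_nat (S k) * Z.of_nat M)%Z)
             + Rabs (c (Z.of_nat i - Z.of_nat j - Z.of_nat (S k) * Z.of_nat M)%Z).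

Let g_nonneg i j k : 0 <= g i j k.
Proof. unfold g. apply Rplus_le_le_0_compat; apply Rabs_pos. Qed.

(* For fixed [i] and [k], the indices [i - j +- (k+1) M], [j < N], fill two disjoint windows of the
   [k]-th block of length [M] of the tail [|r| >= K]. *)
Let rsum_g_le_block i k : (i < N)%nat ->
  rsum N (fun j => g i j k) <= rsum M (fun u => tail_abs c K (k * M + u)).
Proof.
  intros Hi.
  set (pos u := Rabs (c (Z.of_nat (K + (k * M + u))))).
  set (neg u := Rabs (c (- Z.of_nat (K + (k * M + u)))%Z)).
  rewrite (rsum_ext N _ (fun j => pos (i + (N - 1 - j))%nat + neg (N - 1 - i + j)%nat))
    by (intros j Hj; unfold g, pos, neg, K; f_equal; f_equal; f_equal; nia).
  replace (rsum M (fun u => tail_abs c K (k * M + u))) with (rsum M pos + rsum M neg)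
    by (rewrite <- rsum_plus; reflexivity).
  rewrite rsum_plus.
  apply Rplus_le_compat.
  - apply rsum_rev_window_le; [intros; apply Rabs_pos | lia].
  - apply rsum_window_le; [intros; apply Rabs_pos | lia].
Qed.

Let rsum_rsum_g_le i L : (i < N)%nat ->
  rsum L (fun k => rsum N (fun j => g i j k)) <= Series (tail_abs c K).
Proof.
  intros Hi. eapply Rle_trans.
  - apply rsum_le. intros k _. apply rsum_g_le_block. exact Hi.
  - rewrite rsum_blocks. apply rsum_le_Series; [apply tail_abs_nonneg | exact Htail].
Qed.

Lemma alias_row_sum_le i : (i < N)%nat ->
  rsum N (fun j => Rabs (alias_mx c M i j)) <= Series (tail_abs c K).
Proof.
  intros Hi.
  assert (Hg : forall j, (j < N)%nat -> ex_series (g i j)).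
  { intros j Hj. apply (ex_series_rsum_bounded _ (Series (tail_abs c K))); [apply g_nonneg|].
    intros L. eapply Rle_trans; [|apply (rsum_rsum_g_le i L Hi)].
    apply rsum_le. intros k _.
    apply (rsum_term_le N (fun j' => g i j' k)); [intros; apply g_nonneg | exact Hj]. }
  destruct (Series_rsum N (g i) Hg) as [_ Heq].
  apply Rle_trans with (rsum N (fun j => Series (g i j))).
  - apply rsum_le. intros j Hj. apply abs_Series_le; [intros k; apply Rabs_triang | apply Hg; exact Hj].
  - rewrite <- Heq. apply ex_series_rsum_bounded.
    + intros k. apply rsum_nonneg. intros j. apply g_nonneg.
    + intros L. apply rsum_rsum_g_le. exact Hi.
Qed.

End AliasRowSum.

Lemma alias_mx_transpose c M i j :
  alias_mx c M j i = alias_mx (fun r => c (- r)%Z) M i j.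
Proof.
  unfold alias_mx. apply Series_ext. intros k. rewrite Rplus_comm. f_equal; f_equal; lia.
Qed.

Lemma tail_abs_reflect c K t : tail_abs (fun r => c (- r)%Z) K t = tail_abs c K t.
Proof. unfold tail_abs. rewrite Z.opp_involutive, Rplus_comm. reflexivity. Qed.

Lemma opnorm2_alias_mx_le c N M : (2 * N <= M)%nat ->
  ex_series (tail_abs c (M - N + 1)) ->
  Rbar_le (opnorm2 N (alias_mx c M)) (Finite (Series (tail_abs c (M - N + 1)))).
Proof.
  intros HNM Htail. apply opnorm2_le_Schur.
  - apply (rsum_le_Series _ 0); [apply tail_abs_nonneg | exact Htail].
  - intros i Hi. apply alias_row_sum_le; assumption.
  - intros j Hj. rewrite (rsum_ext N _ (fun i => Rabs (alias_mx (fun r => c (- r)%Z) M j i)))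
      by (intros; rewrite alias_mx_transpose; reflexivity).
    rewrite <- (Series_ext _ _ (tail_abs_reflect c (M - N + 1))).
    apply alias_row_sum_le; [exact HNM | | exact Hj].
    apply (ex_series_ext (tail_abs c (M - N + 1))); [intros; symmetry; apply tail_abs_reflect | exact Htail].
Qed.

Lemma Rpower_pos x y : 0 < Rpower x y.
Proof. apply exp_pos. Qed.

(* Convexity of [x ^ (-s)]: the secant over [x, x + 1] is steeper than the tangent at [x + 1]. *)
Lemma Rpower_neg_increment_ge x s : 0 < x -> 0 < s ->
  s * Rpower (x + 1) (- (1 + s)) <= Rpower x (- s) - Rpower (x + 1) (- s).
Proof.
  intros Hx Hs. unfold Rpower.
  set (a := ln x). set (b := ln (x + 1)).
  assert (Ea : exp a = x) by (apply exp_ln; lra).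
  assert (Eb : exp b = x + 1) by (apply exp_ln; lra).
  assert (Hba : b - a >= 1 / (x + 1)).
  { assert (H := exp_ineq1_le (a - b)).
    replace (exp (a - b)) with (x / (x + 1)) in H
      by (unfold Rminus; rewrite exp_plus, exp_Ropp, Ea, Eb; reflexivity).
    assert (x / (x + 1) = 1 - 1 / (x + 1)) by (field; lra). lra. }
  replace (exp (- (1 + s) * b)) with (exp (- s * b) / (x + 1))
    by (replace (- (1 + s) * b) with (- s * b + - b) by ring; rewrite exp_plus, exp_Ropp, Eb; reflexivity).
  replace (exp (- s * a)) with (exp (- s * b) * exp (s * (b - a)))
    by (rewrite <- exp_plus; f_equal; ring).
  assert (H1 := exp_ineq1_le (s * (b - a))).
  assert (Hp := exp_pos (- s * b)).
  assert (s * (b - a) >= s * (1 / (x + 1))) by (apply Rmult_ge_compat_l; lra).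
  assert (exp (- s * b) * (exp (s * (b - a)) - 1 - s * (1 / (x + 1))) >= 0)
    by (apply Rle_ge, Rmult_le_pos; lra).
  unfold Rdiv in *. nra.
Qed.

Lemma rsum_Rpower_neg_le x0 s T : 0 < x0 -> 0 < s ->
  rsum T (fun t => Rpower (x0 + 1 + INR t) (- (1 + s))) <= / s * Rpower x0 (- s).
Proof.
  intros Hx0 Hs.
  assert (Hinv : 0 < / s) by (apply Rinv_0_lt_compat; lra).
  assert (Htele : rsum T (fun t => Rpower (x0 + 1 + INR t) (- (1 + s)))
                  <= / s * (Rpower x0 (- s) - Rpower (x0 + INR T) (- s))).
  { induction T as [|T IH]; cbn [rsum].
    - rewrite Rplus_0_r. lra.
    - pose proof (pos_INR T) as HT.
      assert (Hinc := Rpower_neg_increment_ge (x0 + INR T) s ltac:(lra) Hs).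
      rewrite S_INR. replace (x0 + 1 + INR T) with (x0 + INR T + 1) by ring.
      replace (x0 + (INR T + 1)) with (x0 + INR T + 1) by ring.
      apply (Rmult_le_compat_l (/ s)) in Hinc; [|lra].
      rewrite <- Rmult_assoc, Rinv_l, Rmult_1_l in Hinc by lra.
      lra. }
  eapply Rle_trans; [exact Htele|].
  assert (0 < Rpower (x0 + INR T) (- s)) by apply Rpower_pos.
  apply Rmult_le_compat_l; lra.
Qed.

Lemma ex_series_tail_abs_of_decay c s D K : 0 < s -> (2 <= K)%nat ->
  (forall r, r <> 0%Z -> Rabs (c r) <= D * Rpower (IZR (Z.abs r)) (- (1 + s))) ->
  ex_series (tail_abs c K).
Proof.
  intros Hs HK Hdecay.
  set (x0 := INR (K - 1)).
  assert (Hx0 : 0 < x0) by (apply lt_0_INR; lia).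
  assert (Habs : forall t, IZR (Z.abs (Z.of_nat (K + t))) = x0 + 1 + INR t).
  { intros t. rewrite Z.abs_eq by lia. rewrite <- INR_IZR_INZ. unfold x0.
    replace (K + t)%nat with (K - 1 + t + 1)%nat by lia. rewrite !plus_INR. simpl. ring. }
  assert (Hterm : forall t, tail_abs c K t <= 2 * D * Rpower (x0 + 1 + INR t) (- (1 + s))).
  { intros t. unfold tail_abs.
    assert (H1 := Hdecay (Z.of_nat (K + t)) ltac:(lia)).
    assert (H2 := Hdecay (- Z.of_nat (K + t))%Z ltac:(lia)).
    rewrite Z.abs_opp in H2. rewrite Habs in H1, H2. lra. }
  assert (HD : 0 <= D).
  { assert (H := Hdecay 1%Z ltac:(discriminate)).
    assert (0 < Rpower (IZR (Z.abs 1)) (- (1 + s))) by apply Rpower_pos.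
    pose proof (Rabs_pos (c 1%Z)). nra. }
  apply (ex_series_rsum_bounded _ (2 * D * (/ s * Rpower x0 (- s)))); [apply tail_abs_nonneg|].
  intros T. eapply Rle_trans; [apply rsum_le; intros t _; apply Hterm|].
  rewrite rsum_scal. apply Rmult_le_compat_l; [lra | apply rsum_Rpower_neg_le; assumption].
Qed.

Lemma abs_pow_0 a : abs_pow 0 a = 0.
Proof. unfold abs_pow. destruct (Req_EM_T 0 0); [reflexivity | contradiction]. Qed.

Lemma abs_pow_neq0 x a : x <> 0 -> abs_pow x a = Rpower (Rabs x) a.
Proof. intros Hx. unfold abs_pow. destruct (Req_EM_T x 0); [contradiction | reflexivity]. Qed.

Lemma abs_pow_nonneg x a : 0 <= abs_pow x a.
Proof. unfold abs_pow. destruct (Req_EM_T x 0); [lra | left; apply Rpower_pos]. Qed.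

Lemma abs_pow_opp x a : abs_pow (- x) a = abs_pow x a.
Proof.
  destruct (Req_EM_T x 0) as [->|Hx]; [now rewrite Ropp_0|].
  rewrite !abs_pow_neq0, Rabs_Ropp by lra. reflexivity.
Qed.

Lemma continuous_abs_pow a x : 0 < a -> continuous (fun t => abs_pow t a) x.
Proof.
  intros Ha. destruct (Req_EM_T x 0) as [->|Hx].
  - apply continuity_pt_filterlim. intros eps Heps.
    exists (Rpower eps (/ a)). split; [apply Rpower_pos|].
    intros y [_ Hy]. simpl in *. unfold R_dist in *. rewrite Rminus_0_r in Hy.
    rewrite abs_pow_0, Rminus_0_r, Rabs_pos_eq by apply abs_pow_nonneg.
    destruct (Req_EM_T y 0) as [->|Hy0]; [rewrite abs_pow_0; lra|].
    rewrite abs_pow_neq0 by exact Hy0.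
    replace eps with (Rpower (Rpower eps (/ a)) a)
      by (rewrite Rpower_mult, Rinv_l, Rpower_1 by lra; reflexivity).
    apply Rlt_Rpower_l; [exact Ha | split; [apply Rabs_pos_lt|]; assumption].
  - assert (Hpos : 0 < Rabs x) by (apply Rabs_pos_lt; exact Hx).
    apply (continuous_ext_loc _ (fun t => Rpower (Rabs t) a)).
    + exists (mkposreal _ Hpos). intros y Hy. symmetry. apply abs_pow_neq0.
      intros ->. change (Rabs (0 - x) < Rabs x) in Hy. rewrite Rminus_0_l, Rabs_Ropp in Hy. lra.
    + apply (continuous_comp Rabs (fun t => Rpower t a)); [apply continuous_Rabs|].
      apply (@ex_derive_continuous R_AbsRing R_NormedModule).
      exists (a * Rpower (Rabs x) (a - 1)). apply is_derive_Reals, derivable_pt_lim_power. exact Hpos.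
Qed.

Lemma ex_RInt_abs_pow_mul a g x y : 0 < a -> (forall t, continuous g t) ->
  ex_RInt (fun t => abs_pow t a * g t) x y.
Proof.
  intros Ha Hg. apply (@ex_RInt_continuous R_CompleteNormedModule). intros t _.
  apply (continuous_mult (fun t => abs_pow t a) g); [apply continuous_abs_pow; exact Ha | apply Hg].
Qed.

Lemma continuous_cos_mul w t : continuous (fun t => cos (t * w)) t.
Proof.
  apply continuous_cos_comp, (continuous_mult (fun t => t) (fun _ => w));
    [apply continuous_id | apply continuous_const].
Qed.

Lemma continuous_sin_mul w t : continuous (fun t => sin (t * w)) t.
Proof.
  apply continuous_sin_comp, (continuous_mult (fun t => t) (fun _ => w));
    [apply continuous_id | apply continuous_const].
Qed.

Lemma Re_RInt (f : R -> C) x y :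
  ex_RInt (fun t => fst (f t)) x y -> ex_RInt (fun t => snd (f t)) x y ->
  Re (@RInt C_R_CompleteNormedModule f x y) = RInt (fun t => fst (f t)) x y.
Proof.
  intros H1 H2.
  assert (H : @ex_RInt C_R_CompleteNormedModule f x y)
    by exact (@ex_RInt_fct_extend_pair R_NormedModule R_NormedModule f x y H1 H2).
  symmetry. apply is_RInt_unique.
  exact (@is_RInt_fct_extend_fst R_NormedModule R_NormedModule f x y _ (RInt_correct _ _ _ H)).
Qed.

Lemma ckernel_eq_RInt_cos h a r : 0 < a ->
  ckernel h a r = h / (2 * PI) * RInt (fun t => abs_pow t a * cos (t * (h * IZR r))) (- PI / h) (PI / h).
Proof.
  intros Ha. unfold ckernel, ckernelC.
  change (Re (scal (h / (2 * PI)) ?z)) with (h / (2 * PI) * Re z). f_equal.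
  rewrite Re_RInt.
  - apply RInt_ext. intros t _. cbn. unfold mult; cbn. do 2 f_equal. ring.
  - apply (ex_RInt_ext (fun t => abs_pow t a * cos (t * (h * IZR r)))).
    + intros t _. cbn. unfold mult; cbn. do 2 f_equal. ring.
    + apply ex_RInt_abs_pow_mul; [exact Ha | apply continuous_cos_mul].
  - apply (ex_RInt_ext (fun t => abs_pow t a * sin (t * (h * IZR r)))).
    + intros t _. cbn. unfold mult; cbn. do 2 f_equal. ring.
    + apply ex_RInt_abs_pow_mul; [exact Ha | apply continuous_sin_mul].
Qed.

Lemma RInt_even (f : R -> R) L : (forall x, f (- x) = f x) -> ex_RInt f 0 L ->
  RInt f (- L) L = 2 * RInt f 0 L.
Proof.
  intros Heven Hf.
  assert (HI : is_RInt f 0 L (RInt f 0 L)) by exact (RInt_correct (V := R_CompleteNormedModule) _ _ _ Hf).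
  assert (Hneg : is_RInt f (- L) 0 (RInt f 0 L)).
  { assert (H := is_RInt_swap _ _ _ _ HI).
    replace L with (- - L) in H at 1 by ring. replace 0 with (- 0) in H at 1 by ring.
    apply is_RInt_comp_opp, is_RInt_opp in H. rewrite opp_opp in H.
    apply (is_RInt_ext _ f) in H; [exact H|].
    intros t _. rewrite opp_opp. apply Heven. }
  rewrite (is_RInt_unique _ _ _ _ (is_RInt_Chasles _ _ _ _ _ _ Hneg HI)).
  unfold plus; simpl. ring.
Qed.

Lemma abs_RInt_le_increment f G g x y : x <= y -> ex_RInt f x y ->
  (forall t, x <= t <= y -> is_derive G t (g t)) ->
  (forall t, x <= t <= y -> continuous g t) ->
  (forall t, x < t < y -> Rabs (f t) <= g t) ->
  Rabs (RInt f x y) <= G y - G x.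
Proof.
  intros Hxy Hf HG Hg Hfg.
  assert (HI : is_RInt g x y (minus (G y) (G x))).
  { apply (@is_RInt_derive R_CompleteNormedModule);
      intros t Ht; rewrite Rmin_left, Rmax_right in Ht by exact Hxy; [apply HG | apply Hg]; exact Ht. }
  replace (G y - G x) with (RInt g x y) by (apply is_RInt_unique; exact HI).
  eapply Rle_trans; [apply abs_RInt_le; assumption|].
  apply RInt_le; [exact Hxy | apply (ex_RInt_norm f); exact Hf | eexists; exact HI | exact Hfg].
Qed.

Section PowCosIntegral.
Variables a w : R.
Hypotheses (Ha : 0 < a) (Hw : 0 < w).

Let P t := Rpower t a.
Let F t := abs_pow t a * cos (t * w).

(* Two integrations by parts on [t ^ a cos (t w)] leave the boundary term [A] and the remainder [H]. *)
Let A t := P t * sin (t * w) / w + a * P t / t * cos (t * w) / (w * w).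
Let H t := a * (a - 1) * P t / (t * t) * cos (t * w) / (w * w).

(* [G] is monotone with [G' = |a (a - 1)| t ^ (a - 2) / w ^ 2], which dominates [|H|]. *)
Let sg := if Rle_dec 1 a then 1 else -1.
Let G t := sg * (a * P t / t) / (w * w).
Let dG t := sg * (a * (a - 1) * P t / (t * t)) / (w * w).

Let A_derive t : 0 < t -> is_derive A t (P t * cos (t * w) + H t).
Proof. intros Ht. unfold A, H, P, Rpower. auto_derive; [lra|]. field. lra. Qed.

Let G_derive t : 0 < t -> is_derive G t (dG t).
Proof. intros Ht. unfold G, dG, P, Rpower. auto_derive; [lra|]. field. lra. Qed.

Let continuous_H t : 0 < t -> continuous H t.
Proof.
  intros Ht. apply (@ex_derive_continuous R_AbsRing R_NormedModule).
  unfold H, P, Rpower. auto_derive. repeat split; nra.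
Qed.

Let continuous_dG t : 0 < t -> continuous dG t.
Proof.
  intros Ht. apply (@ex_derive_continuous R_AbsRing R_NormedModule).
  unfold dG, P, Rpower. auto_derive. repeat split; nra.
Qed.

Let abs_H_le_dG t : 0 < t -> Rabs (H t) <= dG t.
Proof.
  intros Ht. unfold H, dG.
  assert (Hk : 0 < a * P t / (t * t) / (w * w))
    by (assert (0 < P t) by apply Rpower_pos; apply Rdiv_lt_0_compat; [apply Rdiv_lt_0_compat|]; nra).
  replace (a * (a - 1) * P t / (t * t) * cos (t * w) / (w * w))
    with ((a - 1) * cos (t * w) * (a * P t / (t * t) / (w * w))) by (field; lra).
  replace (sg * (a * (a - 1) * P t / (t * t)) / (w * w))
    with (sg * (a - 1) * (a * P t / (t * t) / (w * w))) by (field; lra).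
  rewrite Rabs_mult, (Rabs_pos_eq (_ / _)) by lra.
  apply Rmult_le_compat_r; [lra|].
  assert (Hsg : sg * (a - 1) = Rabs (a - 1)).
  { unfold sg. destruct (Rle_dec 1 a); [rewrite Rabs_pos_eq | rewrite Rabs_left]; lra. }
  rewrite Hsg, Rabs_mult.
  pose proof (Rabs_pos (a - 1)). pose proof (COS_bound (t * w)).
  assert (Rabs (cos (t * w)) <= 1) by (apply Rabs_le; lra). nra.
Qed.

Let ex_RInt_F x y : ex_RInt F x y.
Proof. apply ex_RInt_abs_pow_mul; [exact Ha | apply continuous_cos_mul]. Qed.

Let RInt_F_by_parts d L : 0 < d <= L -> RInt F d L = A L - A d - RInt H d L.
Proof.
  intros HdL.
  assert (HA : is_RInt (fun t => P t * cos (t * w) + H t) d L (minus (A L) (A d))).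
  { apply (@is_RInt_derive R_CompleteNormedModule);
      intros t Ht; rewrite Rmin_left, Rmax_right in Ht by lra.
    - apply A_derive. lra.
    - apply (@ex_derive_continuous R_AbsRing R_NormedModule).
      unfold H, P, Rpower. auto_derive. repeat split; nra. }
  assert (HH : is_RInt H d L (RInt H d L)).
  { apply (RInt_correct (V := R_CompleteNormedModule)), (@ex_RInt_continuous R_CompleteNormedModule).
    intros t Ht. rewrite Rmin_left, Rmax_right in Ht by lra. apply continuous_H. lra. }
  apply is_RInt_unique. apply (is_RInt_ext (fun t => minus (P t * cos (t * w) + H t) (H t))).
  - intros t Ht. rewrite Rmin_left, Rmax_right in Ht by lra.
    unfold F, P. rewrite abs_pow_neq0, Rabs_pos_eq by lra. unfold minus, plus, opp; simpl. ring.
  - apply (is_RInt_minus _ _ _ _ _ _ HA HH).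
Qed.

Let abs_RInt_H_le d L : 0 < d <= L ->
  Rabs (RInt H d L) <= (a * P L / L + a * P d / d) / (w * w).
Proof.
  intros HdL.
  assert (HG : Rabs (RInt H d L) <= G L - G d).
  { apply (abs_RInt_le_increment H G dG); [lra | | | |].
    - apply (@ex_RInt_continuous R_CompleteNormedModule).
      intros t Ht. rewrite Rmin_left, Rmax_right in Ht by lra. apply continuous_H. lra.
    - intros t Ht. apply G_derive. lra.
    - intros t Ht. apply continuous_dG. lra.
    - intros t Ht. apply abs_H_le_dG. lra. }
  assert (0 < a * P L / L) by (assert (0 < P L) by apply Rpower_pos; apply Rdiv_lt_0_compat; nra).
  assert (0 < a * P d / d) by (assert (0 < P d) by apply Rpower_pos; apply Rdiv_lt_0_compat; nra).
  assert (0 < / (w * w)) by (apply Rinv_0_lt_compat; nra).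
  unfold G, sg in HG. unfold Rdiv in *. destruct (Rle_dec 1 a); nra.
Qed.

Let abs_A_le t s : 0 < t -> Rabs (sin (t * w)) <= s ->
  Rabs (A t) <= s * P t / w + a * P t / t / (w * w).
Proof.
  intros Ht Hsin. unfold A. eapply Rle_trans; [apply Rabs_triang|].
  assert (0 < P t) by apply Rpower_pos. pose proof (COS_bound (t * w)).
  assert (Hcos : Rabs (cos (t * w)) <= 1) by (apply Rabs_le; lra).
  apply Rplus_le_compat.
  - unfold Rdiv. rewrite !Rabs_mult, Rabs_inv, (Rabs_pos_eq (P t)), (Rabs_pos_eq w) by lra.
    assert (0 < P t * / w) by (apply Rmult_lt_0_compat; [lra | apply Rinv_0_lt_compat; lra]).
    nra.
  - replace (a * P t / t * cos (t * w) / (w * w)) with (cos (t * w) * (a * P t / t / (w * w)))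
      by (field; lra).
    assert (0 < a * P t / t / (w * w))
      by (apply Rdiv_lt_0_compat; [apply Rdiv_lt_0_compat|]; nra).
    rewrite Rabs_mult, (Rabs_pos_eq (_ / _)) by lra. nra.
Qed.

Let abs_RInt_F_near_0 d : 0 < d -> Rabs (RInt F 0 d) <= d * P d.
Proof.
  intros Hd. replace d with (d - 0) at 2 by ring.
  apply abs_RInt_le_const; [lra | apply ex_RInt_F|].
  intros t Ht. unfold F. rewrite Rabs_mult, (Rabs_pos_eq (abs_pow t a)) by apply abs_pow_nonneg.
  assert (Hpow : abs_pow t a <= P d).
  { destruct (Req_EM_T t 0) as [->|Ht0]; [rewrite abs_pow_0; left; apply Rpower_pos|].
    rewrite abs_pow_neq0, Rabs_pos_eq by lra. apply Rle_Rpower_l; lra. }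
  pose proof (COS_bound (t * w)). assert (Rabs (cos (t * w)) <= 1) by (apply Rabs_le; lra).
  pose proof (abs_pow_nonneg t a). pose proof (Rabs_pos (cos (t * w))). nra.
Qed.

Lemma abs_RInt_abs_pow_cos_le d L : 0 < d <= L -> sin (L * w) = 0 ->
  Rabs (RInt (fun t => abs_pow t a * cos (t * w)) 0 L)
  <= d * Rpower d a + Rpower d a / w
     + 2 * (a * Rpower L a / L + a * Rpower d a / d) / (w * w).
Proof.
  intros HdL HsinL.
  change (Rabs (RInt F 0 L) <= d * P d + P d / w + 2 * (a * P L / L + a * P d / d) / (w * w)).
  rewrite <- (RInt_Chasles F 0 d L) by apply ex_RInt_F.
  rewrite (RInt_F_by_parts d L HdL).
  assert (B0 := abs_RInt_F_near_0 d ltac:(lra)).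
  assert (BH := abs_RInt_H_le d L HdL).
  assert (BL := abs_A_le L 0 ltac:(lra) ltac:(rewrite HsinL, Rabs_R0; lra)).
  assert (Bd := abs_A_le d 1 ltac:(lra) ltac:(pose proof (SIN_bound (d * w)); apply Rabs_le; lra)).
  pose proof (Rabs_triang (RInt F 0 d) (A L - A d - RInt H d L)).
  pose proof (Rabs_triang (A L - A d) (- RInt H d L)).
  pose proof (Rabs_triang (A L) (- A d)).
  rewrite Rabs_Ropp in *. unfold plus; simpl.
  replace (2 * (a * P L / L + a * P d / d) / (w * w))
    with (a * P L / L / (w * w) + a * P d / d / (w * w) + (a * P L / L + a * P d / d) / (w * w))
    by (field; lra).
  replace (0 * P L / w) with 0 in BL by (field; lra).
  replace (1 * P d / w) with (P d / w) in Bd by (field; lra).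
  unfold Rminus in *. lra.
Qed.

End PowCosIntegral.

Lemma pow_cos_bound_rescaled a L h rho : 0 < a -> 0 < L -> 0 < h -> 1 <= rho ->
  let d := L / rho in let w := h * rho in
  d * Rpower d a + Rpower d a / w + 2 * (a * Rpower L a / L + a * Rpower d a / d) / (w * w)
  <= (L * Rpower L a + Rpower L a / h + 4 * a * Rpower L a / (L * h * h))
     * Rpower rho (- (1 + Rmin a 1)).
Proof.
  intros Ha HL Hh Hrho d w.
  set (q := Rpower rho (- (1 + Rmin a 1))).
  set (u := / rho). set (v := Rpower rho (- a)). set (La := Rpower L a).
  assert (Hu : 0 < u) by (apply Rinv_0_lt_compat; lra).
  assert (Hv : 0 < v) by apply Rpower_pos.
  assert (HLa : 0 < La) by apply Rpower_pos.
  assert (Eu : u = Rpower rho (Ropp 1)) by (unfold u; rewrite Rpower_Ropp, Rpower_1 by lra; reflexivity).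
  assert (Huv : u * v <= q).
  { rewrite Eu. unfold v, q. rewrite <- Rpower_plus. apply Rle_Rpower; [lra|].
    pose proof (Rmin_l a 1). lra. }
  assert (Huu : u * u <= q).
  { rewrite Eu. unfold q. rewrite <- Rpower_plus. apply Rle_Rpower; [lra|].
    pose proof (Rmin_r a 1). lra. }
  assert (Ed : d = L * u) by reflexivity.
  assert (Eda : Rpower d a = La * v).
  { rewrite Ed, Eu. unfold La, v. rewrite <- Rpower_mult_distr, Rpower_mult by (try apply Rpower_pos; lra).
    do 2 f_equal. ring. }
  assert (Ew : w = h / u) by (unfold w, u; field; lra).
  rewrite Eda, Ed, Ew. fold La.
  replace (L * u * (La * v) + La * v / (h / u)
           + 2 * (a * La / L + a * (La * v) / (L * u)) / (h / u * (h / u)))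
    with (L * La * (u * v) + La / h * (u * v)
          + 2 * a * La / (L * h * h) * (u * u) + 2 * a * La / (L * h * h) * (u * v))
    by (field; lra).
  assert (0 < L * La) by nra.
  assert (0 < La / h) by (apply Rdiv_lt_0_compat; lra).
  assert (0 < 2 * a * La / (L * h * h))
    by (apply Rdiv_lt_0_compat; [nra | apply Rmult_lt_0_compat; nra]).
  replace (4 * a * La / (L * h * h)) with (2 * (2 * a * La / (L * h * h))) by (field; lra).
  nra.
Qed.

Lemma ckernel_eq_RInt_half h a r : 0 < h -> 0 < a ->
  ckernel h a r = h / PI * RInt (fun t => abs_pow t a * cos (t * (h * IZR (Z.abs r)))) 0 (PI / h).
Proof.
  intros Hh Ha. pose proof PI_RGT_0.
  rewrite ckernel_eq_RInt_cos by exact Ha.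
  replace (- PI / h) with (- (PI / h)) by (field; lra).
  rewrite (RInt_ext _ (fun t => abs_pow t a * cos (t * (h * IZR (Z.abs r))))).
  2: { intros t _. f_equal. rewrite abs_IZR.
       destruct (Rcase_abs (IZR r)) as [Hneg|Hpos].
       - rewrite Rabs_left by exact Hneg.
         replace (t * (h * - IZR r)) with (- (t * (h * IZR r))) by ring. symmetry. apply cos_neg.
       - rewrite Rabs_pos_eq by lra. reflexivity. }
  rewrite RInt_even.
  - field. lra.
  - intros t. rewrite abs_pow_opp.
    replace (- t * (h * IZR (Z.abs r))) with (- (t * (h * IZR (Z.abs r)))) by ring.
    rewrite cos_neg. reflexivity.
  - apply ex_RInt_abs_pow_mul; [exact Ha | apply continuous_cos_mul].
Qed.

Lemma ckernel_decay h a : 0 < h -> 0 < a ->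
  exists D, forall r, r <> 0%Z ->
    Rabs (ckernel h a r) <= D * Rpower (IZR (Z.abs r)) (- (1 + Rmin a 1)).
Proof.
  intros Hh Ha. pose proof PI_RGT_0.
  set (L := PI / h).
  assert (HL : 0 < L) by (apply Rdiv_lt_0_compat; lra).
  set (C := L * Rpower L a + Rpower L a / h + 4 * a * Rpower L a / (L * h * h)).
  exists (h / PI * C).
  intros r Hr. rewrite ckernel_eq_RInt_half by assumption. fold L.
  set (rho := IZR (Z.abs r)).
  assert (Hrho : 1 <= rho) by (apply IZR_le; lia).
  assert (Hd : 0 < L / rho <= L).
  { split; [apply Rdiv_lt_0_compat; lra|].
    apply Rle_trans with (L / 1); [|right; field].
    apply Rmult_le_compat_l; [lra | apply Rinv_le_contravar; lra]. }
  assert (Hsin : sin (L * (h * rho)) = 0).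
  { apply sin_eq_0_1. exists (Z.abs r). unfold rho, L. field. lra. }
  assert (Hest := abs_RInt_abs_pow_cos_le a (h * rho) Ha ltac:(nra) (L / rho) L Hd Hsin).
  assert (Hscale := pow_cos_bound_rescaled a L h rho Ha HL Hh Hrho). simpl in Hscale. fold C in Hscale.
  rewrite Rabs_mult, (Rabs_pos_eq (h / PI)) by (apply Rlt_le, Rdiv_lt_0_compat; lra).
  rewrite Rmult_assoc. apply Rmult_le_compat_l; [apply Rlt_le, Rdiv_lt_0_compat; lra|].
  eapply Rle_trans; [exact Hest | exact Hscale].
Qed.

Theorem mainTheorem3 (h alpha : R) (n m : nat)
  (hh : 0 < h) (ha0 : 0 < alpha) (ha2 : alpha <= 2)
  (hM : (2 * 2 ^ n <= 2 ^ m)%nat) :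
  Rbar_le (opnorm2 (2 ^ n) (Emat h alpha (2 ^ n) (2 ^ m)))
          (Finite (tail_abs_sum h alpha (2 ^ m - 2 ^ n + 1))).
Proof.
  set (N := (2 ^ n)%nat). set (M := (2 ^ m)%nat). fold N M in hM.
  assert (HN : (1 <= N)%nat) by (pose proof (Nat.pow_nonzero 2 n); unfold N; lia).
  destruct (ckernel_decay h alpha hh ha0) as [D Hdecay].
  assert (Hs : 0 < Rmin alpha 1) by (apply Rmin_glb_lt; lra).
  apply opnorm2_alias_mx_le; [exact hM|].
  apply (ex_series_tail_abs_of_decay _ _ D _ Hs); [lia | exact Hdecay].
Qed.
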